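(* Let $M$ be a free $\mathbb{T}$-module with a finite $\mathbb{T}$-basis, $V$ its associated complex vector space, and $(\cdot,\cdot)$ a bicomplex scalar product on $M$ which is hyperbolic positive and closed on $V$. Let $|\phi\rangle\in M$ and $|\psi\rangle\in V$. Then for $k=1,2$, $$\langle\phi_{\mathbf{e_k}}|(|\psi\rangle)=\langle\phi_{\mathbf{e_k}}|\psi\rangle,$$ where the left side is the functional $\langle\phi_{\mathbf{e_k}}|:|\chi\rangle\mapsto P_k(\langle\phi|\chi\rangle)$ evaluated at $|\psi\rangle$, and the right side is the scalar product $(|\phi_{\mathbf{e_k}}\rangle,|\psi\rangle)$ of the ket $|\phi_{\mathbf{e_k}}\rangle:=P_k(|\phi\rangle)\in V$ with $|\psi\rangle$.
   Context: Bicomplex numbers: $\mathbb{T}=\{z_1+z_2\mathbf{i_2}: z_1,z_2\in\mathbb{C}(\mathbf{i_1})\}$, $\mathbb{C}(\mathbf{i_1})=\{x+y\mathbf{i_1}: x,y\in\mathbb{R}\}$, $\mathbf{i_1}^2=\mathbf{i_2}^2=-1$, $\mathbf{i_1}\mathbf{i_2}=\mathbf{i_2}\mathbf{i_1}=\mathbf{j}$, $\mathbf{j}^2=1$ (commutative). Hyperbolic numbers $\mathbb{D}=\{x+y\mathbf{j}:x,y\in\mathbb{R}\}$. Idempotents $\mathbf{e_1}=(1+\mathbf{j})/2$, $\mathbf{e_2}=(1-\mathbf{j})/2$. Every $w=z_1+z_2\mathbf{i_2}$ is uniquely $w=(z_1-z_2\mathbf{i_1})\mathbf{e_1}+(z_1+z_2\mathbf{i_1})\mathbf{e_2}$;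 $P_1(w)=z_1-z_2\mathbf{i_1}$, $P_2(w)=z_1+z_2\mathbf{i_1}$. Conjugation: $(z_1+z_2\mathbf{i_2})^{\dagger_3}=\overline{z_1}-\overline{z_2}\mathbf{i_2}$. $\mathbb{D}^+=\{a\mathbf{e_1}+b\mathbf{e_2}: a,b\ge 0\}$. $M$ has $\mathbb{T}$-basis $\{|m_1\rangle,\dots,|m_n\rangle\}$, $V=\{\sum x_l|m_l\rangle: x_l\in\mathbb{C}(\mathbf{i_1})\}$; for $|\phi\rangle=\sum x_l|m_l\rangle$ with $x_l=x_{1l}\mathbf{e_1}+x_{2l}\mathbf{e_2}$, $x_{kl}\in\mathbb{C}(\mathbf{i_1})$, set $P_k(|\phi\rangle)=\sum_l x_{kl}|m_l\rangle\in V$. A bicomplex scalar product is a map $(\cdot,\cdot):M\times M\to\mathbb{T}$, additive in the second argument, with $(|\phi\rangle,\alpha|\psi\rangle)=\alpha(|\phi\rangle,|\psi\rangle)$ for $\alpha\in\mathbb{T}$, $(|\phi\rangle,|\psi\rangle)=(|\psi\rangle,|\phi\rangle)^{\dagger_3}$, $(|\phi\rangle,|\phi\rangle)=0\iff|\phi\rangle=0$; hyperbolic positive: $(|\phi\rangle,|\phi\rangle)\in\mathbb{D}^+$; closed on $V$: $(|\phi\rangle,|\psi\rangle)\in\mathbb{C}(\mathbf{i_1})$ for $|\phi\rangle,|\psi\rangle\in V$. The bra $\langle\phi|$ is the functional $|\psi\rangle\mapsto\langle\phi|\psi\rangle:=(|\phi\rangle,|\psi\rangle)$. *)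

(* real numbers = an arbitrary realType R (the reals),
   C(i1) = R[i] (mathcomp-real-closed complex numbers, 'i%C = i1). *)
From HB Require Import structures.
From mathcomp Require Import all_boot all_algebra.
From mathcomp Require Import reals.
From mathcomp Require Export complex.
Set Implicit Arguments. Unset Strict Implicit. Unset Printing Implicit Defensive.
Import GRing.Theory Num.Theory.
Local Open Scope ring_scope.

Section Bicomplex.
Variable R : realType.
Local Notation C := R[i].

(* A bicomplex number z1 + z2 i2 with z1, z2 in C(i1). *)
Record bicomplex := BC { bz1 : C; bz2 : C }.

Definition bc0 : bicomplex := BC 0 0.
Definition bc_add (w v : bicomplex) := BC (bz1 w + bz1 v) (bz2 w + bz2 v).
Definition bc_mul (w v : bicomplex) :=
  BC (bz1 w * bz1 v - bz2 w * bz2 v) (bz1 w * bz2 v + bz2 w * bz1 v).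
Definition bc_of (z : C) : bicomplex := BC z 0.
Definition bc_conj3 (w : bicomplex) := BC (conjc (bz1 w)) (- conjc (bz2 w)).
Definition bcP1 (w : bicomplex) : C := bz1 w - bz2 w * 'i%C.
Definition bcP2 (w : bicomplex) : C := bz1 w + bz2 w * 'i%C.
(* e1 = (1 + j)/2, e2 = (1 - j)/2, with j = i1 i2 *)
Definition bc_j : bicomplex := BC 0 'i%C.
Definition bc_e1 : bicomplex := BC (2^-1) ('i%C / 2).
Definition bc_e2 : bicomplex := BC (2^-1) (- ('i%C / 2)).
Definition in_Dplus (w : bicomplex) : Prop :=
  exists a b : R, 0 <= a /\ 0 <= b /\
    w = bc_add (bc_mul (bc_of (a%:C)%C) bc_e1) (bc_mul (bc_of (b%:C)%C) bc_e2).

(* The free T-module M with T-basis |m_1>,...,|m_n> is represented by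
   its coordinate module T^n : a ket is the function l |-> its coordinate. *)
Definition ket (n : nat) := 'I_n -> bicomplex.
Definition ket0 n : ket n := fun _ => bc0.
Definition ket_add n (f g : ket n) : ket n := fun l => bc_add (f l) (g l).
Definition ket_scale n (a : bicomplex) (f : ket n) : ket n :=
  fun l => bc_mul a (f l).
Definition in_V n (f : ket n) : Prop := forall l, bz2 (f l) = 0.
Definition ketP1 n (f : ket n) : ket n := fun l => bc_of (bcP1 (f l)).
Definition ketP2 n (f : ket n) : ket n := fun l => bc_of (bcP2 (f l)).

Definition bicomplex_scalar_product n (sp : ket n -> ket n -> bicomplex) : Prop :=
  [/\ (forall phi psi chi, sp phi (ket_add psi chi) = bc_add (sp phi psi) (sp phi chi)),
      (forall phi psi (a : bicomplex), sp phi (ket_scale a psi) = bc_mul a (sp phi psi)),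
      (forall phi psi, sp phi psi = bc_conj3 (sp psi phi)) &
      (forall phi, sp phi phi = bc0 <-> phi = @ket0 n)].

Definition hyperbolic_positive n (sp : ket n -> ket n -> bicomplex) : Prop :=
  forall phi, in_Dplus (sp phi phi).

Definition closed_on_V n (sp : ket n -> ket n -> bicomplex) : Prop :=
  forall phi psi, in_V phi -> in_V psi -> bz2 (sp phi psi) = 0.

Definition bra_e1 n (sp : ket n -> ket n -> bicomplex) (phi : ket n) : ket n -> C :=
  fun chi => bcP1 (sp phi chi).
Definition bra_e2 n (sp : ket n -> ket n -> bicomplex) (phi : ket n) : ket n -> C :=
  fun chi => bcP2 (sp phi chi).

End Bicomplex.

(* Every ket splits along the idempotents as |phi> = e1 P1|phi> + e2 P2|phi>.
   The scalar product is antilinear in its first argument and e1, e2 are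
   fixed by the conjugation, so <phi|psi> = e1 <P1 phi|psi> + e2 <P2 phi|psi>.
   For psi in V both scalar products on the right lie in C(i1), since the
   product is closed on V, and the ring morphism P_k, which sends e_k to 1 and
   the other idempotent to 0, extracts exactly the k-th of them. *)
From HB Require Import structures.
From mathcomp Require Import all_boot all_algebra.
From mathcomp Require Import reals complex ring.
From Stdlib Require Import FunctionalExtensionality.
Set Implicit Arguments. Unset Strict Implicit. Unset Printing Implicit Defensive.
Import GRing.Theory Num.Theory.
Local Open Scope ring_scope.

Section BicomplexAlgebra.
Variable R : realType.
Local Notation C := R[i].
Local Notation T := (bicomplex R).
Local Notation e1 := (bc_e1 R).
Local Notation e2 := (bc_e2 R).

Lemma bc_ext (w v : T) : bz1 w = bz1 v -> bz2 w = bz2 v -> w = v.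
Proof. by case: w; case: v => /= ? ? ? ? -> ->. Qed.

Lemma conjc_i : ('i%C : C)^*%C = - 'i%C.
Proof. by apply/eqP; rewrite eq_complex /= oppr0 !eqxx. Qed.

Lemma conjc_inv2 : ((2 : C)^-1)^*%C = 2^-1.
Proof. by rewrite conjc_inv conjc_nat. Qed.

Lemma conjc_idiv2 : (('i%C / 2 : C)^*)%C = - ('i%C / 2).
Proof. by rewrite (conjc_is_multiplicative R).1 conjc_inv2 conjc_i mulNr. Qed.

Lemma bc_conj3_add (w v : T) :
  bc_conj3 (bc_add w v) = bc_add (bc_conj3 w) (bc_conj3 v).
Proof. by apply: bc_ext; rewrite /= rmorphD //= opprD. Qed.

Lemma bc_conj3_mul (w v : T) :
  bc_conj3 (bc_mul w v) = bc_mul (bc_conj3 w) (bc_conj3 v).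
Proof. by apply: bc_ext => /=; rewrite ?rmorphB ?rmorphD !rmorphM /=; ring. Qed.

Lemma bc_conj3_e1 : bc_conj3 e1 = e1.
Proof. by rewrite /bc_conj3 /bc_e1 conjc_inv2 conjc_idiv2 opprK. Qed.

Lemma bc_conj3_e2 : bc_conj3 e2 = e2.
Proof. by rewrite /bc_conj3 /bc_e2 conjc_inv2 rmorphN opprK; congr BC; exact: conjc_idiv2. Qed.

Lemma bcP1_add (w v : T) : bcP1 (bc_add w v) = bcP1 w + bcP1 v.
Proof. by rewrite /bcP1 /=; ring. Qed.

Lemma bcP2_add (w v : T) : bcP2 (bc_add w v) = bcP2 w + bcP2 v.
Proof. by rewrite /bcP2 /=; ring. Qed.

Lemma bcP1_mul (w v : T) : bcP1 (bc_mul w v) = bcP1 w * bcP1 v.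
Proof. by have i2 := sqr_i R; rewrite /bcP1 /=; ring: i2. Qed.

Lemma bcP2_mul (w v : T) : bcP2 (bc_mul w v) = bcP2 w * bcP2 v.
Proof. by have i2 := sqr_i R; rewrite /bcP2 /=; ring: i2. Qed.

Lemma bcP1_e1 : bcP1 e1 = 1.
Proof. by have i2 := sqr_i R; rewrite /bcP1 /=; field: i2. Qed.

Lemma bcP1_e2 : bcP1 e2 = 0.
Proof. by have i2 := sqr_i R; rewrite /bcP1 /=; field: i2. Qed.

Lemma bcP2_e1 : bcP2 e1 = 0.
Proof. by have i2 := sqr_i R; rewrite /bcP2 /=; field: i2. Qed.

Lemma bcP2_e2 : bcP2 e2 = 1.
Proof. by have i2 := sqr_i R; rewrite /bcP2 /=; field: i2. Qed.

Lemma bc_of_bcP1 (w : T) : bz2 w = 0 -> bc_of (bcP1 w) = w.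
Proof. by case: w => z1 z2 /= ->; rewrite /bcP1 /= mul0r subr0. Qed.

Lemma bc_of_bcP2 (w : T) : bz2 w = 0 -> bc_of (bcP2 w) = w.
Proof. by case: w => z1 z2 /= ->; rewrite /bcP2 /= mul0r addr0. Qed.

Lemma bc_idempotent_decomposition (w : T) :
  w = bc_add (bc_mul e1 (bc_of (bcP1 w))) (bc_mul e2 (bc_of (bcP2 w))).
Proof.
have i2 := sqr_i R.
by case: w => z1 z2; apply: bc_ext; rewrite /bcP1 /bcP2 /=; field: i2.
Qed.

Lemma ket_idempotent_decomposition n (phi : ket R n) :
  phi = ket_add (ket_scale e1 (ketP1 phi)) (ket_scale e2 (ketP2 phi)).
Proof. by apply: functional_extensionality => l; exact: bc_idempotent_decomposition. Qed.

End BicomplexAlgebra.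

Section AntilinearInFirstArgument.
Variables (R : realType) (n : nat) (sp : ket R n -> ket R n -> bicomplex R).
Hypothesis sp_addr : forall phi psi chi,
  sp phi (ket_add psi chi) = bc_add (sp phi psi) (sp phi chi).
Hypothesis sp_scaler : forall phi psi a,
  sp phi (ket_scale a psi) = bc_mul a (sp phi psi).
Hypothesis sp_conj3 : forall phi psi, sp phi psi = bc_conj3 (sp psi phi).

Lemma sp_addl phi psi chi :
  sp (ket_add phi psi) chi = bc_add (sp phi chi) (sp psi chi).
Proof. by rewrite sp_conj3 sp_addr bc_conj3_add -!sp_conj3. Qed.

Lemma sp_scalel a phi psi :
  sp (ket_scale a phi) psi = bc_mul (bc_conj3 a) (sp phi psi).
Proof. by rewrite sp_conj3 sp_scaler bc_conj3_mul -sp_conj3. Qed.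

Lemma sp_idempotent_decomposition phi psi :
  sp phi psi = bc_add (bc_mul (bc_e1 R) (sp (ketP1 phi) psi))
                      (bc_mul (bc_e2 R) (sp (ketP2 phi) psi)).
Proof.
by rewrite {1}[phi]ket_idempotent_decomposition sp_addl !sp_scalel
  bc_conj3_e1 bc_conj3_e2.
Qed.

End AntilinearInFirstArgument.

Theorem mainTheorem17 (R : realType) (n : nat)
    (sp : ket R n -> ket R n -> bicomplex R)
    (Hsp : bicomplex_scalar_product sp)
    (Hpos : hyperbolic_positive sp)
    (Hclosed : closed_on_V sp)
    (phi psi : ket R n) (Hpsi : in_V psi) :
  bc_of (bra_e1 sp phi psi) = sp (ketP1 phi) psi /\
  bc_of (bra_e2 sp phi psi) = sp (ketP2 phi) psi.
Proof.
case: Hsp => sp_addr sp_scaler sp_conj3 _.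
have sp1_in_C : bz2 (sp (ketP1 phi) psi) = 0 by apply: Hclosed.
have sp2_in_C : bz2 (sp (ketP2 phi) psi) = 0 by apply: Hclosed.
rewrite /bra_e1 /bra_e2 (sp_idempotent_decomposition sp_addr sp_scaler sp_conj3).
rewrite bcP1_add bcP2_add !bcP1_mul !bcP2_mul bcP1_e1 bcP1_e2 bcP2_e1 bcP2_e2.
by rewrite !mul1r !mul0r addr0 add0r bc_of_bcP1 // bc_of_bcP2.
Qed.
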